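(* Suppose that $\gamma\in\mathscr{M}(Q)$ is simultaneously $(\varphi,\varepsilon)$-quasicritical of type $\sigma$ and $(\varphi,\varepsilon')$-quasicritical of type $\sigma'$, for some $\varphi\in\mathbb{R}$, $\varepsilon,\varepsilon'\in(0,\pi/4)$ and sign strings $\sigma,\sigma'$. Then $\sigma'\neq-\sigma$.
   Context: $[n]=\{1,\dots,n\}$; signs $\pm$ are identified with $\pm1$. A sign string is $\sigma:[l]\to\{\pm1\}$, $l\ge2$, with alternating consecutive values; $|\sigma|=l$; $-\sigma$ is defined by $(-\sigma)(k)=-\sigma(k)$. Fix $Q=(q,z)\in\mathbb{C}\times\mathbb{S}^1$, $z\ne-1$, $\theta_1\in(-\pi,\pi)$ with $e^{i\theta_1}=z$, and $r\ge2$. $\mathscr{M}(Q)$ is the space of regular $C^r$ curves $\gamma:[0,1]\to\mathbb{C}$ with $\gamma(0)=0$, unit tangent $\mathbf{t}_\gamma(0)=1$, $\gamma(1)=q$, $\mathbf{t}_\gamma(1)=z$, curvature $\kappa_\gamma\in(-1,1)$ everywhere, and $\theta_\gamma(1)=\theta_1$, where $\theta_\gamma$ is the continuous argument of $\mathbf{t}_\gamma$ with $\theta_\gamma(0)=0$. For $\varphi\in\mathbb{R}$ write $\varphi_\pm=\varphi\pm\pi/2$. Stretchability: for $\kappa_0\in(0,1)$ and $r_0,r_b\in\mathbb{R}$, $b>0$, let $F(u)=u/\sqrt{1-u^2}$ ($|u|<1$), $F=+\infty$ for $u\ge1$, $-\infty$ for $u\le-1$; $g_\pm(x)=F(\pm\kappa_0x+r_0/\sqrt{1+r_0^2})$,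 $h_\pm(x)=F(\mp\kappa_0(x-b)+r_b/\sqrt{1+r_b^2})$; $\lambda_+$ (resp. $\lambda_-$) is the common real value of $g_+,h_+$ (resp. $g_-,h_-$) where their graphs meet, or $+\infty$ (resp. $-\infty$) if they do not. If $I\subset[0,1]$ is a closed interval and $\langle\mathbf{t}_\gamma(t),e^{i\psi}\rangle>0$ on $I$, then after translating and rotating by $-\psi$, $\gamma|_I$ is the graph $x\mapsto(x,y(x))$, $x\in[0,b]$; put $f=y'$, $r_0=f(0)$, $r_b=f(b)$. $\gamma|_I$ is $\kappa_0$-stretchable with respect to $e^{i\psi}$ if $|\kappa_\gamma|\le\kappa_0$ on $I$ and $0\in[\lambda_-,\lambda_+]$; it is stretchable with respect to $e^{i\psi}$ (or w.r.t. $\psi$) if it is $\kappa_0$-stretchable for some $\kappa_0\in(0,1)$. Quasicritical: for a sign string $\sigma$, $n=|\sigma|$, $\varphi\in\mathbb{R}$, $\varepsilon\in(0,\pi/4)$, $\gamma$ is $(\varphi,\varepsilon)$-quasicritical of type $\sigma$ if there are closed intervals $J_1<\dots<J_n$ in $[0,1]$ such that for each $k\in[n]$: (i) $\theta_\gamma(J_k)\subset(\varphi_-+2\varepsilon,\varphi_++\varepsilon)$ if $\sigma(k)=+$ and $\theta_\gamma(J_k)\subset(\varphi_--\varepsilon,\varphi_+-2\varepsilon)$ if $\sigma(k)=-$; (ii) $|\theta_\gamma(t)-\varphi|<\pi/2-2\varepsilon$ for all $t\notin\operatorname{Int}(\bigcup_kJ_k)$; (iii) $J_k$ contains a closed subinterval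 $I_k$ with $|\theta_\gamma(t)-\varphi_{\sigma(k)}|<\varepsilon$ for all $t\in I_k$ and $\gamma|_{I_k}$ stretchable with respect to $\varphi_{\sigma(k)}$. *)

From Stdlib Require Import Reals Lra List.
Open Scope R_scope.

(** Curves in C = R^2 are given by coordinate functions gx, gy : R -> R,
    considered on the parameter interval [0,1]. *)
Definition dom01 (t : R) : Prop := 0 <= t <= 1.

Definition deriv_within01 (f : R -> R) (l t : R) : Prop :=
  limit1_in (fun h => (f h - f t) / (h - t)) (fun h => dom01 h /\ h <> t) l t.

Definition cont_within01 (f : R -> R) (t : R) : Prop :=
  limit1_in f dom01 (f t) t.

(** f is C^r on [0,1], with D k its k-th derivative (D 0 = f on [0,1]). *)
Definition Cr01 (r : nat) (f : R -> R) (D : nat -> R -> R) : Prop :=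
  (forall t, dom01 t -> D 0%nat t = f t) /\
  (forall k t, (k < r)%nat -> dom01 t -> deriv_within01 (D k) (D (S k) t) t) /\
  (forall t, dom01 t -> cont_within01 (D r) t).

Definition speed2 (Dx Dy : nat -> R -> R) (t : R) : R :=
  Dx 1%nat t ^ 2 + Dy 1%nat t ^ 2.

Definition tanx (Dx Dy : nat -> R -> R) (t : R) : R := Dx 1%nat t / sqrt (speed2 Dx Dy t).
Definition tany (Dx Dy : nat -> R -> R) (t : R) : R := Dy 1%nat t / sqrt (speed2 Dx Dy t).

Definition curv (Dx Dy : nat -> R -> R) (t : R) : R :=
  (Dx 1%nat t * Dy 2%nat t - Dy 1%nat t * Dx 2%nat t) / (sqrt (speed2 Dx Dy t)) ^ 3.

Definition is_arg (Dx Dy : nat -> R -> R) (theta : R -> R) : Prop :=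
  (forall t, dom01 t -> cont_within01 theta t) /\ theta 0 = 0 /\
  (forall t, dom01 t -> cos (theta t) = tanx Dx Dy t /\ sin (theta t) = tany Dx Dy t).

(** gamma = (gx, gy) (with derivatives Dx, Dy and tangent argument theta)
    belongs to M(Q), Q = (q, z), q = (qx, qy), z = e^{i theta1}, theta1 in (-pi,pi). *)
Definition in_MQ (r : nat) (qx qy theta1 : R) (gx gy : R -> R)
    (Dx Dy : nat -> R -> R) (theta : R -> R) : Prop :=
  - PI < theta1 < PI /\
  Cr01 r gx Dx /\ Cr01 r gy Dy /\
  (forall t, dom01 t -> 0 < speed2 Dx Dy t) /\
  gx 0 = 0 /\ gy 0 = 0 /\ tanx Dx Dy 0 = 1 /\ tany Dx Dy 0 = 0 /\
  gx 1 = qx /\ gy 1 = qy /\ tanx Dx Dy 1 = cos theta1 /\ tany Dx Dy 1 = sin theta1 /\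
  (forall t, dom01 t -> -1 < curv Dx Dy t < 1) /\
  is_arg Dx Dy theta /\ theta 1 = theta1.

Inductive ER : Type := Fin (x : R) | PInf | MInf.

Definition Fext (u : R) : ER :=
  if Rlt_dec (Rabs u) 1 then Fin (u / sqrt (1 - u ^ 2))
  else if Rle_dec 1 u then PInf else MInf.

Definition ER_ge0 (l : ER) : Prop :=
  match l with Fin c => 0 <= c | PInf => True | MInf => False end.
Definition ER_le0 (l : ER) : Prop :=
  match l with Fin c => c <= 0 | PInf => False | MInf => True end.

Definition meet_value (g h : R -> ER) (b : R) (dflt l : ER) : Prop :=
  (exists x c, 0 <= x <= b /\ g x = Fin c /\ h x = Fin c /\ l = Fin c) \/
  ((~ exists x c, 0 <= x <= b /\ g x = Fin c /\ h x = Fin c) /\ l = dflt).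

(** After translating gamma(a) to 0 and rotating by -psi, the point p goes to
    (<p, e^{i psi}>, <p, i e^{i psi}>); the graph slope f = y' at a parameter t
    is (rotated y-velocity)/(rotated x-velocity). *)
Definition kstretchable (k0 : R) (gx gy : R -> R) (Dx Dy : nat -> R -> R)
    (a a' psi : R) : Prop :=
  let u t := Dx 1%nat t * cos psi + Dy 1%nat t * sin psi in
  let v t := - Dx 1%nat t * sin psi + Dy 1%nat t * cos psi in
  let b := (gx a' - gx a) * cos psi + (gy a' - gy a) * sin psi in
  let r0 := v a / u a in
  let rb := v a' / u a' in
  let s0 := r0 / sqrt (1 + r0 ^ 2) in
  let sb := rb / sqrt (1 + rb ^ 2) in
  let gp x := Fext (k0 * x + s0) in
  let gm x := Fext (- k0 * x + s0) in
  let hp x := Fext (- k0 * (x - b) + sb) in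
  let hm x := Fext (k0 * (x - b) + sb) in
  0 < k0 < 1 /\
  0 <= a <= a' /\ a' <= 1 /\
  (forall t, a <= t <= a' -> 0 < tanx Dx Dy t * cos psi + tany Dx Dy t * sin psi) /\
  0 < b /\
  (forall t, a <= t <= a' -> Rabs (curv Dx Dy t) <= k0) /\
  exists lp lm, meet_value gp hp b PInf lp /\ meet_value gm hm b MInf lm /\
                ER_le0 lm /\ ER_ge0 lp.

Definition stretchable gx gy Dx Dy (a a' psi : R) : Prop :=
  exists k0, kstretchable k0 gx gy Dx Dy a a' psi.

(** sign strings: list of signs, true = +1, false = -1 *)
Definition sign_string (s : list bool) : Prop :=
  (2 <= length s)%nat /\
  forall k, (S k < length s)%nat -> nth k s true <> nth (S k) s true.

Definition neg_sign_string (s : list bool) : list bool := map negb s.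

Definition sgnR (b : bool) : R := if b then 1 else -1.

Definition interior (S : R -> Prop) (t : R) : Prop :=
  exists d, 0 < d /\ forall s, t - d < s < t + d -> S s.

(** gamma is (phi, eps)-quasicritical of type sigma.  J_k = [A k, B k],
    I_k = [C k, E k], k = 0 .. n-1 (0-indexed). *)
Definition quasicritical gx gy (Dx Dy : nat -> R -> R) (theta : R -> R)
    (phi eps : R) (sigma : list bool) : Prop :=
  let n := length sigma in
  exists A B C E : nat -> R,
    (forall k, (k < n)%nat -> 0 <= A k <= B k /\ B k <= 1) /\
    (forall k, (S k < n)%nat -> B k < A (S k)) /\
    (forall k t, (k < n)%nat -> A k <= t <= B k ->
       if nth k sigma true
       then phi - PI/2 + 2 * eps < theta t < phi + PI/2 + eps
       else phi - PI/2 - eps < theta t < phi + PI/2 - 2 * eps) /\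
    (forall t, dom01 t ->
       ~ interior (fun s => exists k, (k < n)%nat /\ A k <= s <= B k) t ->
       Rabs (theta t - phi) < PI/2 - 2 * eps) /\
    (forall k, (k < n)%nat ->
       A k <= C k /\ C k <= E k /\ E k <= B k /\
       (forall t, C k <= t <= E k ->
          Rabs (theta t - (phi + sgnR (nth k sigma true) * (PI/2))) < eps) /\
       stretchable gx gy Dx Dy (C k) (E k) (phi + sgnR (nth k sigma true) * (PI/2))).

From Pilot Require Import Defs.
From Stdlib Require Import Reals List Lra Lia Classical.
Open Scope R_scope.

(* Assume eps <= eps' and that the types are sigma and -sigma.  The left end
   of the k-th core interval I_k has angle within eps of phi + sigma(k) pi/2,
   so it lies outside the band |theta - phi| < pi/2 - 2 eps' and hence inside
   some J'_j; comparing the angle windows forces -sigma(j) = sigma(k).  Since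
   the I_k increase, j depends monotonically on k, and it cannot stay put when
   sigma alternates; as j(0) <> 0 this gives j(k) > k for every k, which fails
   at k = n - 1.  The other case eps' <= eps is symmetric. *)

Section OrderedIntervals.

Variable n : nat.
Variables A B : nat -> R.
Hypothesis interval_le : forall k, (k < n)%nat -> A k <= B k.
Hypothesis interval_gap : forall k, (S k < n)%nat -> B k < A (S k).

Lemma ordered_intervals_lt i j : (i < j)%nat -> (j < n)%nat -> B i < A j.
Proof.
  induction j as [|j IH]; intros hij hj; [lia|].
  destruct (Nat.eq_dec i j) as [->|hne]; [apply interval_gap; lia|].
  pose proof (IH ltac:(lia) ltac:(lia)).
  pose proof (interval_le j ltac:(lia)).
  pose proof (interval_gap j hj).
  lra.
Qed.

Variable C : nat -> R.
Variables f g : nat -> bool.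
Hypothesis C_nondecr : forall k, (S k < n)%nat -> C k <= C (S k).
Hypothesis f_alternating : forall k, (S k < n)%nat -> f k <> f (S k).
Hypothesis g_f_0 : g 0%nat <> f 0%nat.
Hypothesis C_covered : forall k, (k < n)%nat ->
  exists j, (j < n)%nat /\ A j <= C k <= B j /\ g j = f k.

Lemma covering_index_gt k : (k < n)%nat ->
  forall j, (j < n)%nat -> A j <= C k <= B j -> g j = f k -> (k < j)%nat.
Proof.
  induction k as [|k IH]; intros hk j hj hC hg.
  - destruct j; [congruence | lia].
  - destruct (C_covered k ltac:(lia)) as [j0 [hj0 [hC0 hg0]]].
    pose proof (IH ltac:(lia) j0 hj0 hC0 hg0).
    pose proof (C_nondecr k hk).
    destruct (Nat.lt_trichotomy j j0) as [hlt | [-> | hgt]].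
    + pose proof (ordered_intervals_lt j j0 hlt hj0). lra.
    + exfalso. apply (f_alternating k hk). congruence.
    + lia.
Qed.

Lemma no_alternating_covering : (0 < n)%nat -> False.
Proof.
  intros hn.
  destruct (C_covered (n - 1) ltac:(lia)) as [j [hj [hC hg]]].
  pose proof (covering_index_gt (n - 1) ltac:(lia) j hj hC hg).
  lia.
Qed.

End OrderedIntervals.

Definition sign_band (phi eps : R) (b : bool) (x : R) : Prop :=
  if b then phi - PI/2 + 2 * eps < x < phi + PI/2 + eps
  else phi - PI/2 - eps < x < phi + PI/2 - 2 * eps.

Lemma near_critical_off_axis (x phi eps eps' : R) (b : bool) :
  0 <= eps <= eps' -> Rabs (x - (phi + sgnR b * (PI/2))) < eps ->
  ~ Rabs (x - phi) < PI/2 - 2 * eps'.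
Proof.
  intros heps hx hax.
  apply Rabs_def2 in hx. apply Rabs_def2 in hax.
  destruct b; simpl in hx; lra.
Qed.

Lemma near_critical_sign_band (x phi eps eps' : R) (b b' : bool) :
  0 <= eps <= eps' -> Rabs (x - (phi + sgnR b * (PI/2))) < eps ->
  sign_band phi eps' b' x -> b' = b.
Proof.
  intros heps hx hband.
  apply Rabs_def2 in hx.
  destruct b, b'; unfold sign_band in hband; simpl in hx; auto; lra.
Qed.

Lemma interior_self (S : R -> Prop) (t : R) : Defs.interior S t -> S t.
Proof.
  intros [d [hd hS]]. apply hS. lra.
Qed.

Lemma length_neg_sign_string (s : list bool) :
  length (neg_sign_string s) = length s.
Proof. apply length_map. Qed.

Lemma nth_neg_sign_string (s : list bool) (j : nat) : (j < length s)%nat ->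
  nth j (neg_sign_string s) true = negb (nth j s true).
Proof.
  intros hj. unfold neg_sign_string.
  rewrite (nth_indep _ true (negb true)) by (rewrite length_map; exact hj).
  apply map_nth.
Qed.

Lemma neg_sign_string_involutive (s : list bool) :
  neg_sign_string (neg_sign_string s) = s.
Proof.
  unfold neg_sign_string. rewrite map_map.
  rewrite <- (map_id s) at 2. apply map_ext. intros []; reflexivity.
Qed.

Lemma quasicritical_opposite_absurd gx gy Dx Dy theta (phi eps eps' : R)
    (s : list bool) :
  sign_string s -> 0 <= eps <= eps' ->
  quasicritical gx gy Dx Dy theta phi eps s ->
  quasicritical gx gy Dx Dy theta phi eps' (neg_sign_string s) -> False.
Proof.
  intros [hlen halt] heps [A [B [C [E [hJ [hgap [_ [_ hI]]]]]]]]
    [A' [B' [C' [E' [hJ' [hgap' [hband' [hout' _]]]]]]]].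
  rewrite length_neg_sign_string in hJ', hgap', hband', hout'.
  apply (no_alternating_covering (length s) A' B')
    with (C := C) (f := fun k => nth k s true)
         (g := fun j => nth j (neg_sign_string s) true); try lia.
  - intros k hk. apply hJ'. exact hk.
  - exact hgap'.
  - intros k hk.
    destruct (hI k ltac:(lia)) as [hAC [hCE [hEB _]]].
    destruct (hI (S k) hk) as [hAC' _].
    pose proof (hgap k hk). lra.
  - exact halt.
  - rewrite nth_neg_sign_string by lia. now destruct (nth 0 s true).
  - intros k hk.
    destruct (hJ k hk) as [[hA0 _] hB1].
    destruct (hI k hk) as [hAC [hCE [hEB [hnear _]]]].
    pose proof (hnear (C k) ltac:(lra)) as hCk.
    assert (hin : Defs.interior
              (fun t => exists j, (j < length s)%nat /\ A' j <= t <= B' j) (C k)).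
    { apply NNPP. intros hnot.
      apply (near_critical_off_axis _ _ _ _ _ heps hCk).
      apply hout'; [unfold dom01; lra | exact hnot]. }
    destruct (interior_self _ _ hin) as [j [hj hCj]].
    exists j. repeat split; try lra; try exact hj.
    exact (near_critical_sign_band _ _ _ _ _ _ heps hCk (hband' j (C k) hj hCj)).
Qed.

Theorem lemma4p6 (r : nat) (qx qy theta1 : R) (gx gy : R -> R)
  (Dx Dy : nat -> R -> R) (theta : R -> R)
  (phi eps eps' : R) (sigma sigma' : list bool) :
  (2 <= r)%nat ->
  in_MQ r qx qy theta1 gx gy Dx Dy theta ->
  sign_string sigma -> sign_string sigma' ->
  0 < eps < PI / 4 -> 0 < eps' < PI / 4 ->
  quasicritical gx gy Dx Dy theta phi eps sigma ->
  quasicritical gx gy Dx Dy theta phi eps' sigma' ->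
  sigma' <> neg_sign_string sigma.
Proof.
  intros _ _ hs hs' he he' Q Q' ->.
  destruct (Rle_lt_dec eps eps') as [hle | hlt].
  - refine (quasicritical_opposite_absurd _ _ _ _ _ _ _ _ _ hs _ Q Q'). lra.
  - rewrite <- (neg_sign_string_involutive sigma) in Q.
    refine (quasicritical_opposite_absurd _ _ _ _ _ _ _ _ _ hs' _ Q' Q). lra.
Qed.
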